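(* Let $M,N\ge 0$ be integers, $a_0,\dots,a_M\in\mathbb{R}$, $f_M(x)=\sum_{m=0}^M a_mT_m(x)$. For $0\le n\le N$ and $y\in[-1,1]$ let $\tilde R_n(y)=\int_{-1}^{y}f_M(y-1-t)T_n(t)\,\mathrm{d}t=\sum_{k=0}^{M+N+1}R_{k,n}T_k(y)$. Then for all integers $k,n$ with $M+1\le k,n\le N$, $$R_{n,k}=\frac{(-1)^{n+k}\,k}{n}\,R_{k,n}.$$
   Context: $T_m(x)=\cos(m\arccos x)$ is the $m$-th Chebyshev polynomial; $R=(R_{k,n})_{0\le k\le M+N+1,\,0\le n\le N}$ is the matrix of Chebyshev coefficients of the convolutions $\tilde R_n$ (the Chebyshev convolution matrix of $f_M$). *)

From Stdlib Require Import Reals.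
From Coquelicot Require Import Coquelicot.
Open Scope R_scope.

Definition cheb (m : nat) (x : R) : R := cos (INR m * acos x).

Definition fM (M : nat) (a : nat -> R) (x : R) : R :=
  sum_f_R0 (fun m => a m * cheb m x) M.

Definition convR (M : nat) (a : nat -> R) (n : nat) (y : R) : R :=
  RInt (fun t => fM M a (y - 1 - t) * cheb n t) (-1) y.

From Stdlib Require Import Reals Lra Lia.
From Coquelicot Require Import Coquelicot.
Open Scope R_scope.

(* Integrating by parts M+1 times (differentiating f_M, integrating T_n) gives
   R~_n(y) = sum_(j <= M) f_M^(j)(-1) I_(j+1,n)(y) + (a polynomial of degree <= M),
   where I_(p,n) is the p-fold antiderivative of T_n obtained from the rule
   int T_m = T_(m+1)/(2(m+1)) - T_(m-1)/(2(m-1)).  Since Chebyshev coefficients on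
   [-1,1] are unique (T_k (cos t) = cos (k t)), for k > M this gives
   R_(k,n) = sum_j f_M^(j)(-1) G_(j+1)(k,n), with G_p(k,n) the T_k-coefficient of
   I_(p,n).  It remains to see that (-1)^k G_p(k,n) / n is symmetric in k, n >= p:
   by induction on p, comparing the recurrence of G_p in n (the rule above) with
   its recurrence in k (the integration rule for Chebyshev coefficients). *)

Ltac auto_derive_by tac :=
  auto_derive;
  [repeat apply conj; try exact I; eexists; tac | repeat (erewrite is_derive_unique by tac)].

Lemma nat_ind2 (P : nat -> Prop) :
  P O -> P 1%nat -> (forall k, P k -> P (S k) -> P (S (S k))) -> forall k, P k.
Proof.
  intros H0 H1 HS k. enough (P k /\ P (S k)) by tauto.
  induction k as [|k [IH1 IH2]]; auto.
Qed.

Lemma INR_S_neq0 n : INR (S n) <> 0.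
Proof. apply not_0_INR; lia. Qed.

Fixpoint chebT (k : nat) (x : R) : R :=
  match k with
  | O => 1
  | S k' => match k' with O => x | S k'' => 2 * x * chebT k' x - chebT k'' x end
  end.

Fixpoint chebU (k : nat) (x : R) : R :=
  match k with
  | O => 1
  | S k' => match k' with O => 2 * x | S k'' => 2 * x * chebU k' x - chebU k'' x end
  end.

Lemma cheb_chebT k y : -1 <= y <= 1 -> cheb k y = chebT k y.
Proof.
  intros Hy. unfold cheb. revert k. apply nat_ind2.
  - simpl. rewrite Rmult_0_l. apply cos_0.
  - simpl. rewrite Rmult_1_l. now apply cos_acos.
  - intros k IH1 IH2.
    change (chebT (S (S k)) y) with (2 * y * chebT (S k) y - chebT k y).
    rewrite <- IH1, <- IH2, !S_INR.
    set (t := acos y). rewrite <- (cos_acos y Hy). fold t.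
    replace ((INR k + 1 + 1) * t) with ((INR k + 1) * t + t) by ring.
    replace (INR k * t) with ((INR k + 1) * t - t) by ring.
    rewrite cos_plus, cos_minus. ring.
Qed.

Lemma chebT_chebU k x : chebT (S k) x = chebU (S k) x - x * chebU k x.
Proof.
  revert k. apply nat_ind2; [simpl; ring | simpl; ring |].
  intros k IH1 IH2. change (chebT (S (S (S k))) x) with (2 * x * chebT (S (S k)) x - chebT (S k) x).
  rewrite IH1, IH2. cbn [chebU]. ring.
Qed.

Lemma chebU_SS_sub k x : chebU (S (S k)) x - chebU k x = 2 * chebT (S (S k)) x.
Proof. rewrite chebT_chebU. cbn [chebU]. ring. Qed.

Lemma is_derive_chebT k x : is_derive (chebT k) x (INR k * chebU (pred k) x).
Proof.
  revert k. apply nat_ind2.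
  - simpl. auto_derive; [trivial | ring].
  - simpl. auto_derive; [trivial | ring].
  - intros k IH1 IH2.
    (* The [set]s keep [auto_derive] from unfolding [chebT]. *)
    set (T1 := chebT (S k)). set (T0 := chebT k).
    apply (is_derive_ext (fun t => 2 * t * T1 t - T0 t)); [reflexivity|].
    auto_derive_by ltac:(first [apply IH1 | apply IH2]).
    unfold T1. rewrite chebT_chebU. destruct k as [|k]; [simpl; ring|].
    cbn [pred]. rewrite !S_INR.
    change (chebU (S (S k)) x) with (2 * x * chebU (S k) x - chebU k x). ring.
Qed.

Definition cheb_sum (c : nat -> R) (d : nat) (x : R) : R :=
  sum_f_R0 (fun k => c k * chebT k x) d.

Definition is_poly_le (d : nat) (h : R -> R) : Prop :=
  exists c, forall x, h x = cheb_sum c d x.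

Lemma cheb_sum_ext a b B x :
  (forall k, (k <= B)%nat -> a k = b k) -> cheb_sum a B x = cheb_sum b B x.
Proof. intros H. apply sum_eq. intros k Hk. now rewrite H. Qed.

Lemma cheb_sum_plus a b B x :
  cheb_sum a B x + cheb_sum b B x = cheb_sum (fun k => a k + b k) B x.
Proof. unfold cheb_sum. rewrite <- plus_sum. apply sum_eq. intros; ring. Qed.

Lemma cheb_sum_scal u a B x : u * cheb_sum a B x = cheb_sum (fun k => u * a k) B x.
Proof. unfold cheb_sum. rewrite scal_sum. apply sum_eq. intros; ring. Qed.

Lemma cheb_sum_trunc c M B x : (M <= B)%nat -> (forall k, (M < k <= B)%nat -> c k = 0) ->
  cheb_sum c B x = cheb_sum c M x.
Proof.
  intros HMB. induction HMB as [|B HMB IH]; intros Hc; [reflexivity|].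
  unfold cheb_sum in *. cbn [sum_f_R0]. rewrite IH, (Hc (S B)) by (lia || (intros; apply Hc; lia)). ring.
Qed.

Lemma cheb_sum_pad e M B x : (M <= B)%nat ->
  cheb_sum (fun k => if Nat.leb k M then e k else 0) B x = cheb_sum e M x.
Proof.
  intros HMB. rewrite (cheb_sum_trunc _ M B x HMB).
  - apply cheb_sum_ext. intros k Hk. destruct (Nat.leb_spec k M); [reflexivity | lia].
  - intros k Hk. destruct (Nat.leb_spec k M); [lia | reflexivity].
Qed.

Lemma cheb_sum_delta n B x : (n <= B)%nat ->
  cheb_sum (fun k => if Nat.eqb k n then 1 else 0) B x = chebT n x.
Proof.
  intros HnB. rewrite (cheb_sum_trunc _ n B x HnB).
  2:{ intros k Hk. destruct (Nat.eqb_spec k n); [lia | reflexivity]. }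
  destruct n as [|n]; unfold cheb_sum; cbn [sum_f_R0]; rewrite Nat.eqb_refl; [ring|].
  rewrite (sum_eq _ (fun _ => 0)), sum_cte; [ring|].
  intros k Hk. destruct (Nat.eqb_spec k (S n)); [lia | ring].
Qed.

Lemma cheb_sum_swap (cs : nat -> R) (g : nat -> nat -> R) M B x :
  sum_f_R0 (fun j => cs j * cheb_sum (g j) B x) M
  = cheb_sum (fun k => sum_f_R0 (fun j => cs j * g j k) M) B x.
Proof.
  induction M as [|M IH]; cbn [sum_f_R0].
  - rewrite cheb_sum_scal. reflexivity.
  - rewrite IH, cheb_sum_scal, cheb_sum_plus. reflexivity.
Qed.

Lemma is_poly_le_ext d h g : (forall x, h x = g x) -> is_poly_le d g -> is_poly_le d h.
Proof. intros H [c Hc]. exists c. intros x. now rewrite H, Hc. Qed.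

Lemma is_poly_le_mono d d' h : (d <= d')%nat -> is_poly_le d h -> is_poly_le d' h.
Proof.
  intros Hd [c Hc]. exists (fun k => if Nat.leb k d then c k else 0). intros x.
  now rewrite Hc, cheb_sum_pad.
Qed.

Lemma is_poly_le_plus d h g : is_poly_le d h -> is_poly_le d g -> is_poly_le d (fun x => h x + g x).
Proof. intros [a Ha] [b Hb]. exists (fun k => a k + b k). intros x. now rewrite Ha, Hb, cheb_sum_plus. Qed.

Lemma is_poly_le_scal d u h : is_poly_le d h -> is_poly_le d (fun x => u * h x).
Proof. intros [a Ha]. exists (fun k => u * a k). intros x. now rewrite Ha, cheb_sum_scal. Qed.

Lemma is_poly_le_sum d K (f : nat -> R -> R) : (forall k, (k <= K)%nat -> is_poly_le d (f k)) ->
  is_poly_le d (fun x => sum_f_R0 (fun k => f k x) K).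
Proof.
  induction K as [|K IH]; intros Hf; [apply Hf; lia|].
  apply is_poly_le_plus; [apply IH; auto | apply Hf; lia].
Qed.

Lemma is_poly_le_chebT d : is_poly_le d (chebT d).
Proof. exists (fun k => if Nat.eqb k d then 1 else 0). intros x. now rewrite cheb_sum_delta. Qed.

Lemma is_poly_le_chebU d : is_poly_le d (chebU d).
Proof.
  revert d. apply nat_ind2.
  - apply is_poly_le_chebT.
  - apply (is_poly_le_ext _ _ (fun x => 2 * chebT 1 x)); [reflexivity|].
    apply is_poly_le_scal, is_poly_le_chebT.
  - intros k H _.
    apply (is_poly_le_ext _ _ (fun x => chebU k x + 2 * chebT (S (S k)) x)).
    { intros x. rewrite <- chebU_SS_sub. ring. }
    apply is_poly_le_plus; [apply (is_poly_le_mono k); auto | apply is_poly_le_scal, is_poly_le_chebT].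
Qed.

Lemma is_derive_sum (f f' : nat -> R -> R) K x : (forall k, is_derive (f k) x (f' k x)) ->
  is_derive (fun t => sum_f_R0 (fun k => f k t) K) x (sum_f_R0 (fun k => f' k x) K).
Proof.
  intros H. induction K as [|K IH]; [apply H|].
  apply (is_derive_ext (fun t => sum_f_R0 (fun k => f k t) K + f (S K) t)); [reflexivity|].
  exact (is_derive_plus _ _ x _ _ IH (H (S K))).
Qed.

Lemma is_poly_le_derive d h : is_poly_le (S d) h ->
  exists h', (forall x, is_derive h x (h' x)) /\ is_poly_le d h'.
Proof.
  intros [c Hc]. exists (fun x => sum_f_R0 (fun k => c k * (INR k * chebU (pred k) x)) (S d)). split.
  - intros x. apply (is_derive_ext (cheb_sum c (S d))); [intros; now rewrite Hc|].
    apply (is_derive_sum (fun k t => c k * chebT k t) (fun k t => c k * (INR k * chebU (pred k) t))). intros k.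
    auto_derive_by ltac:(apply is_derive_chebT). ring.
  - apply is_poly_le_sum. intros k Hk. apply is_poly_le_scal, is_poly_le_scal.
    apply (is_poly_le_mono (pred k)); [lia | apply is_poly_le_chebU].
Qed.

Lemma is_poly_le_ex_derive d h : is_poly_le d h -> forall x, ex_derive h x.
Proof.
  intros Hh x. destruct (is_poly_le_derive d h (is_poly_le_mono d (S d) h ltac:(lia) Hh)) as [h' [Hd _]].
  eexists. apply Hd.
Qed.

Lemma is_derive_eq0_on (F F' : R -> R) a b :
  (forall t, a < t < b -> F t = 0) -> (forall t, is_derive F t (F' t)) ->
  forall t, a < t < b -> F' t = 0.
Proof.
  intros HF HD t Ht.
  assert (Hloc : locally t (fun u => a < u < b)) by exact (open_and _ _ (open_gt a) (open_lt b) t Ht).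
  rewrite <- (is_derive_unique _ _ _ (HD t)). apply is_derive_unique.
  apply (is_derive_ext_loc (fun _ => 0)); [|exact (is_derive_const 0 t)].
  eapply filter_imp; [|exact Hloc]. intros u Hu. symmetry. now apply HF.
Qed.

Lemma cos_sum_deriv2_eq0 K d :
  (forall t, 0 < t < PI -> sum_f_R0 (fun k => d k * cos (INR k * t)) K = 0) ->
  forall t, 0 < t < PI -> sum_f_R0 (fun k => - (d k * INR k ^ 2) * cos (INR k * t)) K = 0.
Proof.
  intros H. apply (is_derive_eq0_on (fun t => sum_f_R0 (fun k => - (d k * INR k) * sin (INR k * t)) K)).
  - apply (is_derive_eq0_on (fun t => sum_f_R0 (fun k => d k * cos (INR k * t)) K)); [exact H|].
    intros t. apply (is_derive_sum (fun k t => d k * cos (INR k * t))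
                                   (fun k t => - (d k * INR k) * sin (INR k * t))).
    intros k. auto_derive; [trivial | ring].
  - intros t. apply (is_derive_sum (fun k t => - (d k * INR k) * sin (INR k * t))
                                   (fun k t => - (d k * INR k ^ 2) * cos (INR k * t))).
    intros k. auto_derive; [trivial | ring].
Qed.

Lemma cos_sum_eq0 K d :
  (forall t, 0 < t < PI -> sum_f_R0 (fun k => d k * cos (INR k * t)) K = 0) ->
  forall k, (k <= K)%nat -> d k = 0.
Proof.
  pose proof PI_RGT_0 as HPI. revert d. induction K as [|K IH]; intros d H k Hk.
  - replace k with 0%nat by lia. specialize (H (PI / 2) ltac:(lra)). simpl in H.
    rewrite Rmult_0_l, cos_0, Rmult_1_r in H. exact H.
  - pose proof (cos_sum_deriv2_eq0 (S K) d H) as H2.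
    (* With [f] the cosine sum, [f'' + (K+1)^2 f] has no [cos ((K+1) t)] term. *)
    assert (Hlow : forall j, (j <= K)%nat -> d j = 0).
    { intros j Hj.
      assert (Hj0 : d j * (INR (S K) ^ 2 - INR j ^ 2) = 0).
      { apply (IH (fun k => d k * (INR (S K) ^ 2 - INR k ^ 2))); [|exact Hj]. intros t Ht.
        transitivity (INR (S K) ^ 2 * sum_f_R0 (fun k => d k * cos (INR k * t)) (S K)
                      + sum_f_R0 (fun k => - (d k * INR k ^ 2) * cos (INR k * t)) (S K));
          [|rewrite H, H2 by exact Ht; ring].
        rewrite scal_sum, <- plus_sum. cbn [sum_f_R0].
        match goal with |- _ = sum_f_R0 ?g K + _ =>
          rewrite (sum_eq g (fun k => d k * (INR (S K) ^ 2 - INR k ^ 2) * cos (INR k * t))) by (intros; ring)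
        end. ring. }
      assert (INR j < INR (S K)) by (apply lt_INR; lia).
      pose proof (pos_INR j). apply Rmult_integral in Hj0 as [|]; [assumption | nra]. }
    destruct (Nat.eq_dec k (S K)) as [->|]; [|apply Hlow; lia].
    assert (HK : 1 <= INR (S K)) by (apply (le_INR 1); lia).
    set (t0 := PI / (4 * INR (S K))).
    assert (Ht0 : 0 < t0 < PI).
    { unfold t0. split; [apply Rdiv_lt_0_compat; lra|].
      apply Rmult_lt_reg_r with (4 * INR (S K)); [lra|]. field_simplify; nra. }
    specialize (H t0 Ht0). cbn [sum_f_R0] in H.
    rewrite (sum_eq _ (fun _ => 0)), sum_cte in H by (intros i Hi; rewrite Hlow; [ring | lia]).
    replace (INR (S K) * t0) with (PI / 4) in H by (unfold t0; field; lra).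
    assert (0 < cos (PI / 4)) by (apply cos_gt_0; lra).
    nra.
Qed.

Lemma cheb_sum_eq0 K c : (forall y, -1 <= y <= 1 -> cheb_sum c K y = 0) ->
  forall k, (k <= K)%nat -> c k = 0.
Proof.
  intros H. apply cos_sum_eq0. intros t Ht.
  rewrite <- (H (cos t)) by apply COS_bound. apply sum_eq. intros k _.
  rewrite <- cheb_chebT by apply COS_bound. unfold cheb. rewrite acos_cos by lra. reflexivity.
Qed.

(* Up to constants, int T_0 = T_1, int T_1 = T_2/4 and
   int T_m = T_(m+1)/(2(m+1)) - T_(m-1)/(2(m-1)) for m >= 2. *)
Definition cheb_antider (F : nat -> R) (n : nat) : R :=
  match n with
  | O => F 1%nat
  | S O => F 2%nat / 4
  | S (S m) => (F (S (S (S m))) / INR (S (S (S m))) - F (S m) / INR (S m)) / 2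
  end.

(* [chebI p n] is I_(p,n); the recursion integrates T_n first: I_(p+1,n) = I_p (int T_n). *)
Fixpoint chebI (p n : nat) (x : R) : R :=
  match p with
  | O => chebT n x
  | S p => cheb_antider (fun m => chebI p m x) n
  end.

Fixpoint chebI_coef (p k n : nat) : R :=
  match p with
  | O => if Nat.eqb k n then 1 else 0
  | S p => cheb_antider (fun m => chebI_coef p k m) n
  end.

Lemma cheb_antider_ext F H n : (forall m, (m <= S n)%nat -> F m = H m) ->
  cheb_antider F n = cheb_antider H n.
Proof. intros E. destruct n as [|[|m]]; simpl; rewrite !E by lia; reflexivity. Qed.

Lemma cheb_antider_lin u v F H n :
  cheb_antider (fun m => u * F m + v * H m) n = u * cheb_antider F n + v * cheb_antider H n.
Proof. destruct n as [|[|m]]; cbn [cheb_antider]; field; repeat split; apply INR_S_neq0. Qed.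

Lemma cheb_antider_sum (g : nat -> nat -> R) B n :
  cheb_antider (fun m => sum_f_R0 (fun k => g k m) B) n = sum_f_R0 (fun k => cheb_antider (g k) n) B.
Proof.
  induction B as [|B IH]; [reflexivity|]. cbn [sum_f_R0]. rewrite <- IH.
  transitivity (cheb_antider (fun m => 1 * sum_f_R0 (fun k => g k m) B + 1 * g (S B) m) n).
  - apply cheb_antider_ext. intros; ring.
  - rewrite cheb_antider_lin. ring.
Qed.

Lemma is_derive_cheb_antider (F : nat -> R -> R) F' x n : (forall m, is_derive (F m) x (F' m)) ->
  is_derive (fun t => cheb_antider (fun m => F m t) n) x (cheb_antider F' n).
Proof.
  intros H. destruct n as [|[|m]]; cbn [cheb_antider]; [apply H | |].
  - auto_derive_by ltac:(apply H). unfold Rdiv. ring.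
  - set (a := INR (S (S (S m)))). set (b := INR (S m)).
    auto_derive_by ltac:(apply H). unfold Rdiv. ring.
Qed.

Lemma cheb_antider_derive_chebT n x :
  cheb_antider (fun m => INR m * chebU (pred m) x) n = chebT n x.
Proof.
  destruct n as [|[|m]]; cbn [cheb_antider pred]; [simpl; ring | simpl; field |].
  rewrite <- (Rmult_1_l (chebT _ x)), <- (Rinv_l 2), Rmult_assoc, <- chebU_SS_sub by lra.
  field. split; apply INR_S_neq0.
Qed.

Lemma is_derive_chebI p n x : is_derive (chebI (S p) n) x (chebI p n x).
Proof.
  revert n. induction p as [|p IH]; intros n.
  - cbn [chebI]. rewrite <- cheb_antider_derive_chebT.
    apply (is_derive_cheb_antider chebT). intros m. apply is_derive_chebT.
  - apply (is_derive_cheb_antider (fun m => chebI (S p) m)). exact IH.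
Qed.

Lemma ex_derive_chebI p n x : ex_derive (chebI p n) x.
Proof. destruct p; eexists; [apply is_derive_chebT | apply is_derive_chebI]. Qed.

Lemma chebI_cheb_sum p n B x : (n + p <= B)%nat ->
  chebI p n x = cheb_sum (fun k => chebI_coef p k n) B x.
Proof.
  revert n. induction p as [|p IH]; intros n HB.
  - symmetry. apply cheb_sum_delta. lia.
  - simpl. rewrite (cheb_antider_ext _ (fun m => cheb_sum (fun k => chebI_coef p k m) B x)).
    + unfold cheb_sum. rewrite cheb_antider_sum. apply sum_eq. intros k _.
      transitivity (cheb_antider (fun m => chebT k x * chebI_coef p k m + 0 * chebI_coef p k m) n).
      { apply cheb_antider_ext. intros; ring. }
      rewrite cheb_antider_lin, Rmult_0_l, Rplus_0_r, Rmult_comm. reflexivity.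
    + intros m Hm. apply IH. lia.
Qed.

Ltac case_eqb :=
  repeat match goal with |- context [Nat.eqb ?a ?b] => destruct (Nat.eqb_spec a b) end;
  try lia; repeat match goal with E : S _ = S _ |- _ => apply eq_add_S in E end; subst.

Lemma chebI_coef_row p s c :
  chebI_coef (S p) (S (S s)) c
  = (chebI_coef p (S s) c - chebI_coef p (S (S (S s))) c) / (2 * INR (S (S s))).
Proof.
  revert c. induction p as [|p IH]; intros c.
  - destruct c as [|[|m]]; cbn [chebI_coef cheb_antider]; case_eqb;
      rewrite ?S_INR, ?INR_0; field; try pose proof (pos_INR s); try pose proof (pos_INR m); lra.
  - change (chebI_coef (S (S p)) (S (S s)) c) with (cheb_antider (chebI_coef (S p) (S (S s))) c).
    change (chebI_coef (S p) (S s) c) with (cheb_antider (chebI_coef p (S s)) c).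
    change (chebI_coef (S p) (S (S (S s))) c) with (cheb_antider (chebI_coef p (S (S (S s)))) c).
    pose proof (INR_S_neq0 (S s)) as Hs.
    rewrite (cheb_antider_ext _ (fun m => / (2 * INR (S (S s))) * chebI_coef p (S s) m
                                        + (- / (2 * INR (S (S s)))) * chebI_coef p (S (S (S s))) m)).
    + rewrite cheb_antider_lin. field. exact Hs.
    + intros m _. rewrite IH. field. exact Hs.
Qed.

Lemma chebI_coef1_sym a b : (1 <= a)%nat -> (1 <= b)%nat ->
  (-1) ^ a * chebI_coef 1 a b / INR b = (-1) ^ b * chebI_coef 1 b a / INR a.
Proof.
  intros Ha Hb.
  destruct a as [|[|a]], b as [|[|b]]; try lia; cbn [chebI_coef cheb_antider]; case_eqb;
    cbn [pow]; rewrite ?S_INR, ?INR_0; field; try pose proof (pos_INR a); try pose proof (pos_INR b); lra.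
Qed.

Lemma chebI_coef_sym p a b : (S p <= a)%nat -> (S p <= b)%nat ->
  (-1) ^ a * chebI_coef (S p) a b / INR b = (-1) ^ b * chebI_coef (S p) b a / INR a.
Proof.
  revert a b. induction p as [|p IH]; intros a b Ha Hb; [now apply chebI_coef1_sym|].
  destruct b as [|[|m]]; try lia.
  assert (Ha0 : INR a <> 0) by (apply not_0_INR; lia).
  pose proof (INR_S_neq0 m). pose proof (INR_S_neq0 (S m)). pose proof (INR_S_neq0 (S (S m))).
  rewrite chebI_coef_row.
  change (chebI_coef (S (S p)) a (S (S m))) with
    ((chebI_coef (S p) a (S (S (S m))) / INR (S (S (S m))) - chebI_coef (S p) a (S m) / INR (S m)) / 2).
  transitivity (((-1) ^ a * chebI_coef (S p) a (S (S (S m))) / INR (S (S (S m)))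
                 - (-1) ^ a * chebI_coef (S p) a (S m) / INR (S m)) / 2 / INR (S (S m))).
  { field. auto. }
  rewrite (IH a (S (S (S m)))), (IH a (S m)) by lia. cbn [pow]. field. auto.
Qed.

Lemma chebI_coef_swap p n k : (S p <= n)%nat -> (S p <= k)%nat ->
  chebI_coef (S p) n k = (-1) ^ (n + k) * INR k / INR n * chebI_coef (S p) k n.
Proof.
  intros Hn Hk. pose proof (chebI_coef_sym p k n Hk Hn) as Hsym.
  assert (Hn0 : INR n <> 0) by (apply not_0_INR; lia).
  assert (Hk0 : INR k <> 0) by (apply not_0_INR; lia).
  assert (Hsq : (-1) ^ n * (-1) ^ n = 1).
  { rewrite <- Rpow_mult_distr. replace (-1 * -1) with 1 by ring. apply pow1. }
  transitivity (INR k * (-1) ^ n * ((-1) ^ n * chebI_coef (S p) n k / INR k)).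
  { rewrite <- (Rmult_1_l (chebI_coef _ n k)) at 1. rewrite <- Hsq. field. exact Hk0. }
  rewrite <- Hsym, pow_add. field. exact Hn0.
Qed.

Lemma is_RInt_conv_by_parts (h h' Phi phi : R -> R) y v :
  (forall x, is_derive h x (h' x)) -> (forall x, ex_derive h' x) ->
  (forall x, is_derive Phi x (phi x)) -> (forall x, ex_derive phi x) ->
  is_RInt (fun t => h' (y - 1 - t) * Phi t) (-1) y v ->
  is_RInt (fun t => h (y - 1 - t) * phi t) (-1) y (h (-1) * Phi y - h y * Phi (-1) + v).
Proof.
  intros Hh Hh' HPhi Hphi HI.
  set (f := fun t => - h' (y - 1 - t) * Phi t + h (y - 1 - t) * phi t).
  assert (Hf : is_RInt f (-1) y (h (y - 1 - y) * Phi y - h (y - 1 - -1) * Phi (-1))).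
  { apply (is_RInt_derive (fun t => h (y - 1 - t) * Phi t)); intros x _; unfold f.
    - auto_derive; [repeat apply conj; [eexists; apply Hh | eexists; apply HPhi | exact I] |].
      rewrite (is_derive_unique (fun t => h t) _ _ (Hh _)), (is_derive_unique (fun t => Phi t) _ _ (HPhi _)).
      unfold Rminus. ring.
    - apply (ex_derive_continuous (fun t => - h' (y - 1 - t) * Phi t + h (y - 1 - t) * phi t)).
      auto_derive. repeat apply conj; [apply Hh' | eexists; apply HPhi | eexists; apply Hh | apply Hphi | exact I]. }
  replace (y - 1 - y) with (-1) in Hf by ring. replace (y - 1 - -1) with y in Hf by ring.
  apply (is_RInt_ext (fun t => plus (f t) (h' (y - 1 - t) * Phi t))).
  - intros t _. unfold f. change plus with Rplus.
    (* The equation lives in Coquelicot's carrier type, which [ring] does not recognise. *)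
    match goal with |- ?a = ?b => change (@eq R a b) end. ring.
  - exact (is_RInt_plus _ _ _ _ _ _ Hf HI).
Qed.

Lemma is_RInt_conv_chebI d h : is_poly_le d h ->
  exists cs : nat -> R, forall q n, exists E, is_poly_le d E /\ forall y,
    is_RInt (fun t => h (y - 1 - t) * chebI q n t) (-1) y
      (sum_f_R0 (fun j => cs j * chebI (S (q + j)) n y) d + E y).
Proof.
  revert h. induction d as [|d IH]; intros h Hh.
  - destruct Hh as [c Hc].
    assert (Hc0 : forall x, h x = c O) by (intros x; rewrite Hc; unfold cheb_sum; simpl; ring).
    exists (fun _ => c O). intros q n. exists (fun _ => - c O * chebI (S q) n (-1)). split.
    { exists (fun _ => - c O * chebI (S q) n (-1)). intros x. unfold cheb_sum. simpl. ring. }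
    intros y. cbn [sum_f_R0]. rewrite Nat.add_0_r.
    replace (c O * chebI (S q) n y + - c O * chebI (S q) n (-1))
      with (h (-1) * chebI (S q) n y - h y * chebI (S q) n (-1) + 0) by (rewrite !Hc0; ring).
    apply (is_RInt_conv_by_parts h (fun _ => 0)).
    + intros x. apply (is_derive_ext (fun _ => c O)); [intros; now rewrite Hc0 | exact (is_derive_const (c O) x)].
    + intros x. exists 0. exact (is_derive_const 0 x).
    + intros x. apply is_derive_chebI.
    + intros x. apply ex_derive_chebI.
    + apply (is_RInt_ext (fun _ => 0)); [intros t _; symmetry; apply Rmult_0_l|].
      pose proof (is_RInt_const (-1) y 0) as H0. change (scal (y - -1) 0) with ((y - -1) * 0) in H0.
      rewrite Rmult_0_r in H0. exact H0.
  - destruct (is_poly_le_derive d h Hh) as [h' [Hh' Hpoly']].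
    destruct (IH h' Hpoly') as [cs' Hcs'].
    exists (fun j => match j with O => h (-1) | S j => cs' j end). intros q n.
    destruct (Hcs' (S q) n) as [E' [HE'poly HE']].
    exists (fun y => E' y + (- chebI (S q) n (-1)) * h y). split.
    { apply is_poly_le_plus; [apply (is_poly_le_mono d); auto | apply is_poly_le_scal; exact Hh]. }
    intros y.
    match goal with |- is_RInt _ _ _ ?v => replace v with (h (-1) * chebI (S q) n y - h y * chebI (S q) n (-1)
                          + (sum_f_R0 (fun j => cs' j * chebI (S (S q + j)) n y) d + E' y)) end.
    + apply (is_RInt_conv_by_parts h h').
      * exact Hh'.
      * exact (is_poly_le_ex_derive d h' Hpoly').
      * intros x. apply is_derive_chebI.
      * intros x. apply ex_derive_chebI.
      * exact (HE' y).
    + rewrite (decomp_sum _ (S d)) by lia. cbn [pred]. rewrite Nat.add_0_r.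
      rewrite (sum_eq (fun i => cs' i * chebI (S (q + S i)) n y) (fun j => cs' j * chebI (S (S q + j)) n y))
        by (intros; now rewrite Nat.add_succ_r).
      ring.
Qed.

Lemma fM_cheb_sum M a x : -1 <= x <= 1 -> fM M a x = cheb_sum a M x.
Proof. intros Hx. apply sum_eq. intros k _. now rewrite cheb_chebT. Qed.

Lemma convR_cheb_sum M a : exists cs : nat -> R, forall n, exists e : nat -> R,
  forall B y, (M + n + 1 <= B)%nat -> -1 <= y <= 1 ->
  convR M a n y = cheb_sum (fun k => sum_f_R0 (fun j => cs j * chebI_coef (S j) k n) M
                                     + (if Nat.leb k M then e k else 0)) B y.
Proof.
  destruct (is_RInt_conv_chebI M (cheb_sum a M)) as [cs Hcs]; [exists a; reflexivity|].
  exists cs. intros n. destruct (Hcs O n) as [E [[e He] HE]]. exists e. intros B y HB Hy.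
  unfold convR. rewrite (RInt_ext _ (fun t => cheb_sum a M (y - 1 - t) * chebI 0 n t)).
  2:{ intros t Ht. rewrite Rmin_left, Rmax_right in Ht by lra.
      cbn [chebI]. rewrite fM_cheb_sum, cheb_chebT by lra. reflexivity. }
  rewrite (is_RInt_unique _ _ _ _ (HE y)), He, <- (cheb_sum_pad e M B) by lia.
  rewrite (sum_eq _ (fun j => cs j * cheb_sum (fun k => chebI_coef (S j) k n) B y))
    by (intros j Hj; rewrite (chebI_cheb_sum _ _ B) by lia; reflexivity).
  rewrite cheb_sum_swap, cheb_sum_plus. reflexivity.
Qed.

Lemma convR_high_coef M N a (Rc : nat -> nat -> R)
  (hR : forall n : nat, (n <= N)%nat -> forall y : R, -1 <= y <= 1 ->
     convR M a n y = sum_f_R0 (fun k => Rc k n * cheb k y) (M + N + 1)) :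
  exists cs : nat -> R, forall n k, (n <= N)%nat -> (M < k <= M + N + 1)%nat ->
    Rc k n = sum_f_R0 (fun j => cs j * chebI_coef (S j) k n) M.
Proof.
  destruct (convR_cheb_sum M a) as [cs Hcs]. exists cs. intros n k Hn Hk.
  destruct (Hcs n) as [e He].
  set (X := fun k => sum_f_R0 (fun j => cs j * chebI_coef (S j) k n) M
                     + (if Nat.leb k M then e k else 0)) in He.
  assert (Hzero : forall y, -1 <= y <= 1 -> cheb_sum (fun k => Rc k n - X k) (M + N + 1) y = 0).
  { intros y Hy. transitivity (convR M a n y - convR M a n y); [|ring].
    rewrite (hR n Hn y Hy) at 1. rewrite (He (M + N + 1)%nat y) by first [lia | exact Hy].
    unfold cheb_sum. rewrite <- minus_sum. apply sum_eq. intros i _. rewrite cheb_chebT by lra. ring. }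
  pose proof (cheb_sum_eq0 _ _ Hzero k ltac:(lia)) as Hk0. unfold X in Hk0.
  destruct (Nat.leb_spec k M); [lia|]. lra.
Qed.

Theorem theorem3p4 (M N : nat) (a : nat -> R) (Rc : nat -> nat -> R)
  (hR : forall n : nat, (n <= N)%nat -> forall y : R, -1 <= y <= 1 ->
     convR M a n y = sum_f_R0 (fun k => Rc k n * cheb k y) (M + N + 1)) :
  forall k n : nat, (M + 1 <= k <= N)%nat -> (M + 1 <= n <= N)%nat ->
    Rc n k = (-1) ^ (n + k) * INR k / INR n * Rc k n.
Proof.
  destruct (convR_high_coef M N a Rc hR) as [cs Hcoef]. intros k n Hk Hn.
  rewrite (Hcoef k n), (Hcoef n k), scal_sum by lia.
  apply sum_eq. intros j Hj. rewrite chebI_coef_swap by lia. ring.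
Qed.
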